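(* Let $(\Omega,\mathcal{A},\mu)$ be a complete $\sigma$-finite measure space, let $E$ be a Köthe function space over $(\Omega,\mathcal{A},\mu)$, and let $X$ be a real Banach space such that the simple functions are dense in the Köthe–Bochner space $E(X)$. If $E(X)$ has the Ball Dentable Property ($BDP$), then $X$ has $BDP$.
   Context: For a real Banach space $X$, $B_X$ denotes its closed unit ball and $X^*$ its dual. A slice of a bounded set $C\subseteq X$ is $S(C,x^*,\alpha)=\{x\in C: x^*(x)>\sup x^*(C)-\alpha\}$ with $x^*\in X^*$, $\|x^*\|=1$, $\alpha>0$. $X$ has the Ball Dentable Property ($BDP$) if for every $\varepsilon>0$ there is a slice of $B_X$ of diameter less than $\varepsilon$. A Köthe function space over a complete $\sigma$-finite measure space $(\Omega,\mathcal{A},\mu)$ is a Banach space $(E,\|\cdot\|_E)$ of real-valued measurable functions on $\Omega$ (modulo equality $\mu$-a.e.) such that: (1) $\chi_A\in E$ for all $A\in\mathcal{A}$ with $\mu(A)<\infty$; (2) every $f\in E$ is $\mu$-integrable over every $A\in\mathcal{A}$ with $\mu(A)<\infty$; (3) if $g$ is measurable, $f\in E$ and $|g|\le|f|$ $\mu$-a.e., then $g\in E$ and $\|g\|_E\le\|f\|_E$. A function $f:\Omega\to X$ is simple if $f=\sum_{i=1}^n x_i\chi_{A_i}$ with $A_i\in\mathcal{A}$ pairwise disjoint, $\mu(A_i)<\infty$, and $x_i\in X\setminus\{0\}$; $f$ is Bochner measurable if it is the $\mu$-a.e. pointwise norm limit of a sequence of simple functions. The Köthe–Bochner space is $E(X)=\{f:\Omega\to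 X \text{ Bochner measurable}: \|f(\cdot)\|\in E\}$ with norm $\|f\|_{E(X)}=\big\|\,\|f(\cdot)\|\,\big\|_E$. *)

From HB Require Import structures.
From mathcomp Require Import all_boot all_order all_algebra.
From mathcomp Require Import all_classical all_reals all_analysis.
Set Implicit Arguments. Unset Strict Implicit. Unset Printing Implicit Defensive.
Import Order.TTheory GRing.Theory Num.Theory.
Import numFieldNormedType.Exports.
Local Open Scope classical_set_scope.
Local Open Scope ring_scope.

Section Defs.
Context {R : realType}.

(* Ball Dentable Property for a normed space presented as a linear subspace
   [S] of a vector space [V] (elements identified when at distance 0) with a
   seminorm [N].  A slice of the unit ball B = [S ∩ {N <= 1}] is given by a
   linear functional [phi] on S of norm 1 (|phi v| <= N v on S and
   sup phi(B) = 1) and alpha > 0: S(B,phi,alpha) = {v in B : phi v > 1 - alpha}.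
   "diameter < eps" is written as: all distances bounded by some d < eps. *)
Definition BDP_on (V : lmodType R) (S : set V) (N : V -> R) : Prop :=
  forall eps : R, 0 < eps ->
  exists (phi : V -> R) (alpha d : R),
    [/\ (forall a u v, S u -> S v -> phi (a *: u + v) = a * phi u + phi v),
        (forall v, S v -> `|phi v| <= N v),
        (forall delta, 0 < delta -> exists v, [/\ S v, N v <= 1 & 1 - delta < phi v]),
        0 < alpha /\ d < eps &
        (forall u v, S u -> S v -> N u <= 1 -> N v <= 1 ->
           1 - alpha < phi u -> 1 - alpha < phi v -> N (u - v) <= d)].

Definition BDP (X : normedModType R) : Prop :=
  BDP_on (V := X) setT (fun x => `|x|).

Context {d : measure_display} {T : measurableType d}.

(* Köthe function space: E is a set of measurable real functions on T
   (considered modulo mu-a.e. equality) with norm NE. *)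
Record kothe_space (mu : {measure set T -> \bar R})
    (E : set (T -> R)) (NE : (T -> R) -> R) : Prop := {
  kothe_meas : forall f, E f -> measurable_fun setT f;
  kothe_add : forall f g : T -> R, E f -> E g -> E (f \+ g);
  kothe_scale : forall (a : R) f, E f -> E (fun t => a * f t);
  kothe_triangle : forall f g : T -> R, E f -> E g -> NE (f \+ g) <= NE f + NE g;
  kothe_homog : forall (a : R) f, E f -> NE (fun t => a * f t) = `|a| * NE f;
  kothe_def : forall f, E f -> (NE f = 0 <-> {ae mu, forall t, f t = 0});
  kothe_complete : forall u : nat -> T -> R, (forall n, E (u n)) ->
    (forall e, 0 < e -> exists M, forall m n, (M <= m)%N -> (M <= n)%N ->
        NE (u m \- u n) < e) ->
    exists2 f, E f & forall e, 0 < e -> exists M, forall n, (M <= n)%N ->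
        NE (u n \- f) < e;
  kothe_indic : forall A, measurable A -> (mu A < +oo)%E -> E (\1_A);
  kothe_locint : forall f A, E f -> measurable A -> (mu A < +oo)%E ->
    mu.-integrable A (EFin \o f);
  kothe_ideal : forall f g : T -> R, measurable_fun setT g -> E f ->
    {ae mu, forall t, `|g t| <= `|f t|} -> E g /\ NE g <= NE f
}.

Context {X : normedModType R}.

Definition simple_fun (mu : {measure set T -> \bar R}) (f : T -> X) : Prop :=
  exists s : seq (X * set T),
    [/\ (forall p, p \in s -> [/\ measurable p.2, (mu p.2 < +oo)%E & p.1 != 0]),
        (forall i j, (i < size s)%N -> (j < size s)%N -> i <> j ->
            (nth (0, set0) s i).2 `&` (nth (0, set0) s j).2 = set0) &
        f = fun t => \sum_(p <- s) (\1_(p.2) t : R) *: p.1].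

Definition bochner_measurable (mu : {measure set T -> \bar R}) (f : T -> X)
  : Prop :=
  exists s : nat -> T -> X, (forall n, simple_fun mu (s n)) /\
    {ae mu, forall t, (fun n => s n t) @ \oo --> f t}.

Definition KB_space (mu : {measure set T -> \bar R}) (E : set (T -> R))
  : set (T -> X) :=
  [set f | bochner_measurable mu f /\ E (fun t => `|f t|)].

Definition KB_norm (NE : (T -> R) -> R) (f : T -> X) : R :=
  NE (fun t => `|f t|).

End Defs.

From HB Require Import structures.
From mathcomp Require Import all_boot all_order all_algebra.
From mathcomp Require Import all_classical all_reals all_analysis.
From mathcomp Require Import measurable_realfun lra.
Set Implicit Arguments.
Unset Strict Implicit.
Unset Printing Implicit Defensive.
Import Order.TTheory GRing.Theory Num.Theory.
Import numFieldNormedType.Exports.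
Local Open Scope classical_set_scope.
Local Open Scope ring_scope.

(* Suppose X fails BDP, so that for some eps > 0 every slice of its unit ball
   contains two points more than eps apart.  Take a slice of the ball of E(X)
   defined by Phi, a point v deep inside it and a simple function
   s = sum_i x_i 1_(A_i), with disjoint A_i, close to v; then Phi s is close to 1.
   On each piece, y |-> Phi (|x_i| y 1_(A_i)) is a bounded linear form on X; by
   [Phi s <= sum_i M_i], with M_i its supremum on the ball, choosing u_i, w_i
   deep in the slices of these forms and more than eps apart puts
   c sum_i |x_i| u_i 1_(A_i) and c sum_i |x_i| w_i 1_(A_i) deep in the slice of
   Phi (for a normalising c close to 1).  By the lattice property of E their
   distance is at least c eps ||s|| >= eps / 4, so the slices of the ball of
   E(X) cannot get arbitrarily small. *)

Section IndicSums.
Context {R : realType} {T : Type} {X : normedModType R}.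
Implicit Types (L : seq (X * set T)) (p : X * set T).

Definition indic_sum L : T -> X := fun t => \sum_(p <- L) (\1_(p.2) t : R) *: p.1.

Definition disjoint_pieces L := pairwise (fun p q : X * set T => [disjoint p.2 & q.2]) L.

Lemma indic_sum_nil t : indic_sum [::] t = 0.
Proof. by rewrite /indic_sum big_nil. Qed.

Lemma indic_sum_cons p L t : indic_sum (p :: L) t = (\1_(p.2) t : R) *: p.1 + indic_sum L t.
Proof. by rewrite /indic_sum big_cons. Qed.

Lemma indic_sum_map (F : X * set T -> X) L t :
  indic_sum [seq (F p, p.2) | p <- L] t = \sum_(p <- L) (\1_(p.2) t : R) *: F p.
Proof. by rewrite /indic_sum big_map. Qed.

Definition rescale L (z : X * set T -> X) : T -> X :=
  indic_sum [seq (`|p.1| *: z p, p.2) | p <- L].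

Lemma disjoint_piecesP L : disjoint_pieces L <->
  (forall i j, (i < size L)%N -> (j < size L)%N -> i <> j ->
    (nth (0, set0) L i).2 `&` (nth (0, set0) L j).2 = set0).
Proof.
split=> [/(pairwiseP (0, set0)) disjL i j iL jL /eqP|disjL].
  rewrite neq_ltn => /orP[ij|ji]; apply/disj_set2P.
    exact: disjL.
  by rewrite disj_set_sym; apply: disjL.
apply/(pairwiseP (0, set0)) => i j iL jL ij; apply/disj_set2P.
by apply: disjL => // ji; rewrite ji ltnn in ij.
Qed.

Lemma disjoint_pieces_map (F : X * set T -> X) L :
  disjoint_pieces L -> disjoint_pieces [seq (F p, p.2) | p <- L].
Proof. by rewrite /disjoint_pieces pairwise_map. Qed.

Lemma indic_sum_out L t : {in L, forall p, ~ p.2 t} -> indic_sum L t = 0.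
Proof.
move=> Lt; rewrite /indic_sum big_seq big1 // => p /Lt pt.
by rewrite indicE memNset ?scale0r.
Qed.

Lemma norm_indic_sum L t : disjoint_pieces L ->
  `|indic_sum L t| = \sum_(p <- L) (\1_(p.2) t : R) * `|p.1|.
Proof.
elim: L => [|[x A] L IH]; first by rewrite indic_sum_nil big_nil normr0.
rewrite /disjoint_pieces pairwise_cons => /andP[/allP disjA disjL].
rewrite indic_sum_cons big_cons /=.
have [At|nAt] := pselect (A t); last first.
  by rewrite indicE memNset // scale0r mul0r !add0r IH.
have outL q : q \in L -> ~ q.2 t.
  by move=> qL qt; move/disj_set2P: (disjA q qL) => /seteqP[/(_ t (conj At qt))].
rewrite indic_sum_out // big_seq big1 => [|q /outL qt]; last first.
  by rewrite indicE memNset ?mul0r.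
by rewrite indicE mem_set // scale1r mul1r !addr0.
Qed.

Lemma norm_rescale L z t : disjoint_pieces L ->
  `|rescale L z t| = \sum_(p <- L) (\1_(p.2) t : R) * (`|p.1| * `|z p|).
Proof.
move=> disjL; rewrite /rescale norm_indic_sum ?big_map; last exact: disjoint_pieces_map.
by apply: eq_bigr => p _; rewrite normrZ normr_id.
Qed.

End IndicSums.

Section SimpleFunctions.
Context {R : realType} {d : measure_display} {T : measurableType d} {X : normedModType R}.
Variable mu : {measure set T -> \bar R}.
Implicit Types (L : seq (X * set T)) (p : X * set T).

Definition finite_piece p := measurable p.2 /\ (mu p.2 < +oo)%E.

Lemma finite_pieceS p {x : X} (B : set T) : finite_piece p -> measurable B ->
  B `<=` p.2 -> finite_piece (x, B).
Proof.
move=> [mA finA] mB BA; split => //; apply: le_lt_trans finA.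
by apply: le_measure; rewrite ?inE.
Qed.

(* Inserting [x *: \1_A] into a disjoint decomposition splits every piece [P]
   into [P `\` A] and [P `&` A], and recurses with [A `\` P]. *)
Lemma disjoint_pieces_insert L (x : X) (A : set T) :
  {in L, forall p, finite_piece p} -> disjoint_pieces L -> finite_piece (x, A) ->
  exists L', [/\ {in L', forall p, finite_piece p}, disjoint_pieces L',
    indic_sum L' = (fun t => (\1_A t : R) *: x + indic_sum L t) &
    {in L', forall q, q.2 `<=` A `|` [set t | exists2 p, p \in L & p.2 t]}].
Proof.
elim: L A => [|[y P] L IH] A finL.
  move=> _ finA; exists [:: (x, A)]; split => //.
  - by move=> q; rewrite inE => /eqP ->.
  - by apply/funext => t; rewrite indic_sum_cons !indic_sum_nil.
  - by move=> q; rewrite inE => /eqP -> /=; apply: subsetUl.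
rewrite /disjoint_pieces pairwise_cons => /andP[/allP disjP disjL] [mA finA].
have [mP finP] : finite_piece (y, P) by apply: finL; rewrite mem_head.
have finL1 : {in L, forall q, finite_piece q}.
  by move=> q qL; apply: finL; rewrite in_cons qL orbT.
have [L' [finL' disjL' sumL' subL']] := IH (A `\` P) finL1 disjL
  (finite_pieceS (conj mA finA) (measurableD mA mP) (@subDsetl _ _ _)).
exists [:: (y, P `\` A), (x + y, P `&` A) & L']; split.
- move=> q; rewrite !in_cons => /orP[/eqP ->|/orP[/eqP ->|/finL' //]].
    by apply: (finite_pieceS (conj mP finP)); [exact: measurableD | exact: subDsetl].
  by apply: (finite_pieceS (conj mP finP)); [exact: measurableI | exact: subIsetl].
- have disj_rest (B : set T) : B `<=` P -> {in L', forall q, [disjoint B & q.2]}.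
    move=> BP q /subL' qsub; apply/disj_set2P/seteqP; split=> // t [Bt /qsub].
    move=> [[_ /(_ (BP t Bt))]//|[r rL rt]].
    by move/disj_set2P: (disjP r rL) => /seteqP[/(_ t (conj (BP t Bt) rt))].
  move: disjL'; rewrite /disjoint_pieces !pairwise_cons /= => ->.
  rewrite andbT -andbA; apply/and3P; split.
  - apply/disj_set2P/seteqP; split => // t [[_ nAt] [_ At]]; exact: nAt.
  - by apply/allP => q /(disj_rest _ (@subDsetl _ _ _)).
  - by apply/allP => q /(disj_rest _ (@subIsetl _ _ _)).
- apply/funext => t; rewrite !indic_sum_cons sumL' /=.
  rewrite !indicE !in_setD !in_setI.
  by case: (t \in A); case: (t \in P); rewrite /= ?scale1r ?scale0r ?add0r ?addr0 // addrA.
- move=> q; rewrite !in_cons => /orP[/eqP -> t [Pt _]|/orP[/eqP -> t [Pt _]|/subL' qsub t]].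
  + by right; exists (y, P) => //; rewrite mem_head.
  + by right; exists (y, P) => //; rewrite mem_head.
  + move=> /qsub [[At _]|[r rL rt]]; first by left.
    by right; exists r => //; rewrite in_cons rL orbT.
Qed.

Lemma indic_sum_disjoint L : {in L, forall p, finite_piece p} ->
  exists L', [/\ {in L', forall p, finite_piece p}, disjoint_pieces L' &
    indic_sum L' = indic_sum L].
Proof.
elim: L => [|[x A] L IH] finL; first by exists [::].
have [L1 [finL1 disjL1 sumL1]] : exists L1, [/\ {in L1, forall p, finite_piece p},
    disjoint_pieces L1 & indic_sum L1 = indic_sum L].
  by apply: IH => p pL; apply: finL; rewrite in_cons pL orbT.
have [L' [finL' disjL' sumL' _]] :=
  disjoint_pieces_insert finL1 disjL1 (finL _ (mem_head _ _)).
by exists L'; split => //; apply/funext => t; rewrite sumL' sumL1 indic_sum_cons.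
Qed.

Lemma simple_fun_disjoint L : {in L, forall p, finite_piece p} -> disjoint_pieces L ->
  simple_fun mu (indic_sum L).
Proof.
move=> finL disjL; exists [seq p <- L | p.1 != 0]; split.
- by move=> p; rewrite mem_filter => /andP[x0 /finL[]].
- exact/disjoint_piecesP/pairwise_filter.
- apply/funext => t; rewrite /indic_sum big_filter [RHS]big_mkcond.
  by apply: eq_bigr => p _; case: eqVneq => [->|]; rewrite ?scaler0.
Qed.

Lemma simple_fun_indic_sum L : {in L, forall p, finite_piece p} ->
  simple_fun mu (indic_sum L).
Proof.
move=> /indic_sum_disjoint[L' [finL' disjL' <-]]; exact: simple_fun_disjoint.
Qed.

Lemma simple_funB (f g : T -> X) : simple_fun mu f -> simple_fun mu g ->
  simple_fun mu (fun t => f t - g t).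
Proof.
move=> [Lf [finLf _ ->]] [Lg [finLg _ ->]].
have -> : (fun t => indic_sum Lf t - indic_sum Lg t) =
    indic_sum (Lf ++ [seq (- p.1, p.2) | p <- Lg]).
  apply/funext => t; rewrite /indic_sum big_cat big_map -sumrN /=.
  by congr (_ + _); apply: eq_bigr => p _; rewrite scalerN.
apply: simple_fun_indic_sum => p; rewrite mem_cat => /orP[/finLf[]//|].
by move=> /mapP[q /finLg[mq finq _] ->].
Qed.

Lemma measurable_sum_indic (L : seq (X * set T)) (c : X * set T -> R) :
  {in L, forall p, measurable p.2} ->
  measurable_fun setT (fun t => \sum_(p <- L) (\1_(p.2) t : R) * c p).
Proof.
elim: L => [|q L IH] mL.
  by under eq_fun do rewrite big_nil; exact: measurable_cst.
under eq_fun do rewrite big_cons.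
apply: measurable_funD; last by apply: IH => p pL; apply: mL; rewrite in_cons pL orbT.
apply: measurable_funM; last exact: measurable_cst.
by apply: measurable_indic; apply: mL; rewrite mem_head.
Qed.

Lemma measurable_norm_simple (f : T -> X) : simple_fun mu f ->
  measurable_fun setT (fun t => `|f t|).
Proof.
move=> [L [finL /disjoint_piecesP disjL ->]].
under eq_fun do rewrite (norm_indic_sum _ disjL).
by apply: measurable_sum_indic => p /finL[].
Qed.

Lemma bochner_measurableB_simple (f g : T -> X) : bochner_measurable mu f ->
  simple_fun mu g -> bochner_measurable mu (fun t => f t - g t).
Proof.
move=> [sf [sf_simple sf_cvg]] g_simple.
exists (fun n t => sf n t - g t); split=> [n|]; first exact: simple_funB.
by apply: filterS sf_cvg => t sf_t; apply: cvgB => //; exact: cvg_cst.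
Qed.

(* Completeness of [mu] is what makes the a.e. limit measurable. *)
Lemma measurable_norm_bochner (f : T -> X) : measure_is_complete mu ->
  bochner_measurable mu f -> measurable_fun setT (fun t => `|f t|).
Proof.
move=> mu_complete [sf [sf_simple sf_cvg]].
set D := [set t | (fun n => sf n t) @ \oo --> f t].
have negD : mu.-negligible (~` D) by exact: sf_cvg.
have mD : measurable D by rewrite -[D]setCK; apply: measurableC; exact: mu_complete.
have mfD : measurable_fun D (fun t => `|f t|).
  apply: (measurable_fun_cvg (h := fun n t => `|sf n t|)) => [n|t Dt].
    exact: measurable_funS (@subsetT _ D) (measurable_norm_simple (sf_simple n)).
  exact: cvg_norm.
move=> _ Y mY; rewrite setTI -[X in measurable X]setTI -(setUv D) setIUl.
apply: measurableU; first exact: mfD.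
by apply: mu_complete; apply: negligibleS negD; exact: subIsetl.
Qed.

End SimpleFunctions.

Section KotheBochner.
Context {R : realType} {d : measure_display} {T : measurableType d} {X : normedModType R}.
Variables (mu : {measure set T -> \bar R}) (E : set (T -> R)) (NE : (T -> R) -> R).
Hypothesis K : kothe_space mu E NE.
Implicit Types (L : seq (X * set T)) (f g h s v : T -> X).

Lemma kothe0 : E (fun _ => 0).
Proof.
have -> : (fun _ => 0) = (fun t : T => 0 * (\1_set0 t : R)).
  by apply/funext => t; rewrite mul0r.
by apply: (kothe_scale K); apply: (kothe_indic K); rewrite ?measure0.
Qed.

Lemma kothe_sum_indic L (c : X * set T -> R) : {in L, forall p, finite_piece mu p} ->
  E (fun t => \sum_(p <- L) (\1_(p.2) t : R) * c p).
Proof.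
elim: L => [|q L IH] finL.
  by under eq_fun do rewrite big_nil; exact: kothe0.
under eq_fun do rewrite big_cons mulrC.
have [mq finq] := finL q (mem_head _ _).
apply: (kothe_add K); first exact/(kothe_scale K)/(kothe_indic K).
by apply: IH => p pL; apply: finL; rewrite in_cons pL orbT.
Qed.

Lemma kothe_le (f g : T -> R) : E f -> measurable_fun setT g ->
  (forall t, `|g t| <= `|f t|) -> E g /\ NE g <= NE f.
Proof. by move=> Ef mg fg; exact: (kothe_ideal K mg Ef (aeW _ fg)). Qed.

Lemma KB_space_disjoint L : {in L, forall p, finite_piece mu p} -> disjoint_pieces L ->
  KB_space mu E (indic_sum L).
Proof.
move=> finL disjL; split.
  exists (fun=> indic_sum L); split=> [n|]; first exact: simple_fun_disjoint.
  by apply: aeW => t; exact: cvg_cst.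
under eq_fun do rewrite (norm_indic_sum _ disjL).
exact: kothe_sum_indic.
Qed.

Lemma KB_space_simple s : simple_fun mu s -> KB_space mu E s.
Proof.
by move=> [L [finL /disjoint_piecesP disjL ->]]; apply: KB_space_disjoint => // p /finL[].
Qed.

Lemma KB_norm_le_add f g h : KB_space mu E f -> KB_space mu E g ->
  measurable_fun setT (fun t => `|h t|) -> (forall t, `|h t| <= `|f t| + `|g t|) ->
  E (fun t => `|h t|) /\ KB_norm NE h <= KB_norm NE f + KB_norm NE g.
Proof.
move=> [_ Ef] [_ Eg] mh hfg.
have [Eh hle] : E (fun t => `|h t|) /\ NE (fun t => `|h t|) <= NE (fun t => `|f t| + `|g t|).
  by apply: (kothe_le (kothe_add K Ef Eg) mh) => t; rewrite normr_id ger0_norm ?addr_ge0.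
by split=> //; apply: le_trans hle (kothe_triangle K Ef Eg).
Qed.

Lemma KB_spaceB_simple v s : measure_is_complete mu -> KB_space mu E v -> simple_fun mu s ->
  KB_space mu E (fun t => v t - s t).
Proof.
move=> mu_complete KBv s_simple; have [bochv _] := KBv.
have bochvs := bochner_measurableB_simple bochv s_simple.
split=> //; apply: (KB_norm_le_add KBv (KB_space_simple s_simple) _ _).1 => [|t].
  exact: measurable_norm_bochner mu_complete bochvs.
exact: ler_normB.
Qed.

Lemma KB_norm_le f g (k : R) : 0 <= k -> KB_space mu E f -> KB_space mu E g ->
  (forall t, `|g t| <= k * `|f t|) -> KB_norm NE g <= k * KB_norm NE f.
Proof.
move=> k_ge0 [_ Ef] [_ Eg] gf; rewrite /KB_norm -(ger0_norm k_ge0) -(kothe_homog K _ Ef).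
apply: (kothe_le (kothe_scale K k Ef) (kothe_meas K Eg) _).2 => t.
by rewrite normr_id normrM normr_id ger0_norm.
Qed.

Lemma KB_space_rescale L z : {in L, forall p, finite_piece mu p} -> disjoint_pieces L ->
  KB_space mu E (rescale L z).
Proof.
move=> finL disjL; apply: KB_space_disjoint; last exact: disjoint_pieces_map.
by move=> _ /mapP[p /finL[mp finp] ->].
Qed.

Lemma KB_norm_rescale_le L z (k : R) : {in L, forall p, finite_piece mu p} ->
  disjoint_pieces L -> 0 <= k -> {in L, forall p, `|z p| <= k} ->
  KB_norm NE (rescale L z) <= k * KB_norm NE (indic_sum L).
Proof.
move=> finL disjL k_ge0 zk.
apply: KB_norm_le (KB_space_disjoint finL disjL) (KB_space_rescale _ finL disjL) _ => // t.
rewrite norm_rescale // norm_indic_sum // mulr_sumr !big_seq; apply: ler_sum => p pL.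
by rewrite [leRHS]mulrC -mulrA !ler_wpM2l ?indicE ?ler0n ?zk.
Qed.

Lemma KB_norm_rescale_ge L z (k : R) : {in L, forall p, finite_piece mu p} ->
  disjoint_pieces L -> 0 < k -> {in L, forall p, k <= `|z p|} ->
  k * KB_norm NE (indic_sum L) <= KB_norm NE (rescale L z).
Proof.
move=> finL disjL k_gt0 kz; rewrite mulrC -ler_pdivlMr // mulrC.
apply: KB_norm_le (KB_space_rescale _ finL disjL) (KB_space_disjoint finL disjL) _ => [|t].
  by rewrite invr_ge0 ltW.
rewrite norm_rescale // norm_indic_sum // mulr_sumr !big_seq; apply: ler_sum => p pL.
rewrite mulrCA ler_wpM2l ?indicE ?ler0n // ler_pdivlMl // mulrC ler_wpM2l //; exact: kz.
Qed.

Lemma linear_indic_sum (Phi : (T -> X) -> R) :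
  (forall a u v, KB_space mu E u -> KB_space mu E v -> Phi (a *: u + v) = a * Phi u + Phi v) ->
  forall L, {in L, forall p, finite_piece mu p} -> disjoint_pieces L ->
  Phi (indic_sum L) = \sum_(p <- L) Phi (indic_sum [:: p]).
Proof.
move=> Phi_lin; elim=> [|q L IH] finL.
  move=> _; have KB0 : KB_space mu E (indic_sum (X := X) [::]).
    by apply: KB_space_disjoint => // p; rewrite in_nil.
  have := Phi_lin (-1) _ _ KB0 KB0.
  rewrite mulN1r addNr big_nil => <-; congr Phi.
  by rewrite scaleN1r addNr; apply/funext => t; rewrite indic_sum_nil.
rewrite /disjoint_pieces pairwise_cons => /andP[_ disjL].
have finL1 : {in L, forall p, finite_piece mu p}.
  by move=> p pL; apply: finL; rewrite in_cons pL orbT.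
have KBq : KB_space mu E (indic_sum [:: q]).
  by apply: KB_space_disjoint => // p; rewrite inE => /eqP ->; apply: finL; rewrite mem_head.
have := Phi_lin 1 _ _ KBq (KB_space_disjoint finL1 disjL).
rewrite mul1r big_cons -IH // => <-; congr Phi.
by rewrite scale1r; apply/funext => t; rewrite fctE !indic_sum_cons indic_sum_nil addr0.
Qed.

End KotheBochner.

Section WideSlices.
Context {R : realType} {X : normedModType R}.
Implicit Types (psi : X -> R) (u v y : X).

Definition linear_form psi := forall a u v, psi (a *: u + v) = a * psi u + psi v.

Lemma linear_form0 psi : linear_form psi -> psi 0 = 0.
Proof. by move=> psi_lin; have := psi_lin (-1) 0 0; rewrite scaler0 addr0 mulN1r addNr. Qed.

Lemma linear_formZ psi a u : linear_form psi -> psi (a *: u) = a * psi u.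
Proof. by move=> psi_lin; rewrite -[a *: u]addr0 psi_lin linear_form0 ?addr0. Qed.

Lemma linear_form_le psi M : linear_form psi -> (forall y, `|y| <= 1 -> psi y <= M) ->
  forall y, `|psi y| <= M * `|y|.
Proof.
move=> psi_lin psi_le.
have le_norm y : psi y <= M * `|y|.
  have [->|y0] := eqVneq y 0; first by rewrite linear_form0 // normr0 mulr0.
  have ny_gt0 : 0 < `|y| by rewrite normr_gt0.
  have := psi_le (`|y|^-1 *: y).
  rewrite normrZ normfV normr_id mulVf ?gt_eqF // lexx linear_formZ // => /(_ isT).
  by rewrite mulrC ler_pdivrMr.
move=> y; rewrite ler_norml le_norm andbT lerNl -mulN1r -linear_formZ // scaleN1r.
by rewrite -(normrN y) le_norm.
Qed.

Definition wide_slices (eps : R) := forall (phi : X -> R) (alpha : R),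
  linear_form phi -> (forall v, `|phi v| <= `|v|) ->
  (forall delta, 0 < delta -> exists v, `|v| <= 1 /\ 1 - delta < phi v) -> 0 < alpha ->
  exists u v, [/\ `|u| <= 1, `|v| <= 1, 1 - alpha < phi u, 1 - alpha < phi v & eps < `|u - v|].

Lemma not_BDP_wide_slices : ~ BDP X -> exists2 eps, 0 < eps <= 1 & wide_slices eps.
Proof.
move=> notBDP; apply: contrapT => no_eps; apply: notBDP => e e_gt0.
have m_le_e : Num.min e 1 <= e by rewrite ge_min lexx.
have m_le1 : Num.min e 1 <= 1 by rewrite ge_min lexx orbT.
have m_gt0 : 0 < Num.min e 1 by rewrite lt_min e_gt0 ltr01.
set eps := Num.min e 1 / 2.
have [phi [alpha [phi_lin phi_le phi_sup alpha_gt0 narrow]]] :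
  exists phi alpha, [/\ linear_form phi, forall v, `|phi v| <= `|v|,
    forall delta, 0 < delta -> exists v, `|v| <= 1 /\ 1 - delta < phi v, 0 < alpha &
    forall u v, `|u| <= 1 -> `|v| <= 1 -> 1 - alpha < phi u -> 1 - alpha < phi v ->
      `|u - v| <= eps].
  apply: contrapT => no_phi; apply: no_eps; exists eps; first by apply/andP; split; rewrite /eps; lra.
  move=> phi alpha phi_lin phi_le phi_sup alpha_gt0; apply: contrapT => no_pair.
  apply: no_phi; exists phi, alpha; split=> // u v nu nv phiu phiv.
  by rewrite leNgt; apply/negP => wide_uv; apply: no_pair; exists u, v.
exists phi, alpha, eps; split.
- by move=> a u v _ _; exact: phi_lin.
- by move=> v _; exact: phi_le.
- by move=> delta /phi_sup[v [nv phiv]]; exists v.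
- by split=> //; rewrite /eps; lra.
- by move=> u v _ _; exact: narrow.
Qed.

(* Rescaling [psi] by its supremum [M] on the ball reduces to [wide_slices];
   when [M = 0] the form vanishes on the ball and any antipodal pair works. *)
Lemma wide_slices_sup eps psi M (x0 : X) beta : wide_slices eps -> eps < 2 ->
  linear_form psi -> (forall y, `|y| <= 1 -> psi y <= M) ->
  (forall delta, 0 < delta -> exists y, `|y| <= 1 /\ M - delta < psi y) ->
  x0 != 0 -> 0 < beta ->
  exists u v, [/\ `|u| <= 1, `|v| <= 1, M - beta < psi u, M - beta < psi v & eps < `|u - v|].
Proof.
move=> wide eps_lt2 psi_lin psi_le psi_sup x0_neq0 beta_gt0.
have M_ge0 : 0 <= M by rewrite -(linear_form0 psi_lin) psi_le ?normr0.
have psi_norm := linear_form_le psi_lin psi_le.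
have [M_gt0|M_le0] := ltrP 0 M; last first.
  have M0 : M = 0 by apply/le_anti; rewrite M_ge0 M_le0.
  set u := `|x0|^-1 *: x0.
  have nu : `|u| = 1 by rewrite normrZ normfV normr_id mulVf ?normr_eq0.
  have psi0 y : psi y = 0.
    by apply/eqP; rewrite -normr_le0 (le_trans (psi_norm y)) // M0 mul0r.
  exists u, (- u); rewrite normrN opprK nu !psi0 M0 sub0r oppr_lt0 beta_gt0.
  by rewrite -mulr2n -scaler_nat normrZ nu mulr1 normr_nat.
have phi_lin : linear_form (fun y => psi y / M).
  by move=> a u v; rewrite psi_lin mulrDl mulrA.
have phi_le y : `|psi y / M| <= `|y|.
  by rewrite normrM normfV (gtr0_norm M_gt0) ler_pdivrMr // mulrC.
have phi_sup delta : 0 < delta -> exists y, `|y| <= 1 /\ 1 - delta < psi y / M.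
  move=> delta_gt0; have [y [ny psiy]] := psi_sup _ (mulr_gt0 delta_gt0 M_gt0).
  by exists y; rewrite ltr_pdivlMr // mulrBl mul1r.
have [u [v [nu nv psiu psiv uv]]] :=
  wide _ _ phi_lin phi_le phi_sup (divr_gt0 beta_gt0 M_gt0).
exists u, v; split=> //; [move: psiu | move: psiv];
  by rewrite ltr_pdivlMr // mulrBl mul1r divfK ?gt_eqF.
Qed.

End WideSlices.

Arguments wide_slices {R} X eps.

Section SliceTransfer.
Context {R : realType} {d : measure_display} {T : measurableType d} {X : normedModType R}.
Variables (mu : {measure set T -> \bar R}) (E : set (T -> R)) (NE : (T -> R) -> R).
Hypothesis K : kothe_space mu E NE.
Variable Phi : (T -> X) -> R.
Hypothesis Phi_lin : forall a u v, KB_space mu E u -> KB_space mu E v ->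
  Phi (a *: u + v) = a * Phi u + Phi v.
Hypothesis Phi_le : forall v, KB_space mu E v -> `|Phi v| <= KB_norm NE v.
Implicit Types (L : seq (X * set T)) (p : X * set T) (z : X * set T -> X) (y : X).

Definition piece_form p y := Phi (rescale [:: p] (fun=> y)).

Definition piece_sup p := sup [set r | exists2 y, `|y| <= 1 & piece_form p y = r].

Section Pieces.
Variable L : seq (X * set T).
Hypotheses (L_fin : {in L, forall p, finite_piece mu p}) (L_disj : disjoint_pieces L).

Let KB_piece p z : p \in L -> KB_space mu E (rescale [:: p] z).
Proof.
by move=> pL; apply: (KB_space_rescale K) => // q; rewrite inE => /eqP ->; exact: L_fin.
Qed.

Lemma linear_piece_form p : p \in L -> linear_form (piece_form p).
Proof.
move=> pL a u v; rewrite /piece_form -Phi_lin; try exact: KB_piece.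
congr Phi.
apply/funext => t; rewrite /rescale /= !fctE !indic_sum_cons !indic_sum_nil !addr0 /=.
by rewrite !scalerDr !scalerA; congr (_ *: _ + _); rewrite mulrC mulrA.
Qed.

Lemma piece_form_le p y : p \in L -> `|y| <= 1 ->
  piece_form p y <= KB_norm NE (indic_sum [:: p]).
Proof.
move=> pL ny; apply: le_trans (ler_norm _) _; apply: le_trans (Phi_le (KB_piece _ pL)) _.
rewrite -[leRHS]mul1r; apply: (KB_norm_rescale_le K) => // q; rewrite inE => /eqP -> //.
exact: L_fin.
Qed.

Let piece_has_sup p : p \in L ->
  has_sup [set r | exists2 y, `|y| <= 1 & piece_form p y = r].
Proof.
move=> pL; split; first by exists (piece_form p 0), 0; rewrite ?normr0.
by exists (KB_norm NE (indic_sum [:: p])) => _ [y ny <-]; exact: piece_form_le.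
Qed.

Lemma piece_form_le_sup p : p \in L -> forall y, `|y| <= 1 -> piece_form p y <= piece_sup p.
Proof. by move=> pL y ny; apply: sup_upper_bound (piece_has_sup pL) _ _; exists y. Qed.

Lemma piece_sup_adherent p : p \in L -> forall delta, 0 < delta ->
  exists y, `|y| <= 1 /\ piece_sup p - delta < piece_form p y.
Proof.
by move=> pL delta delta_gt0; have [_ [y ny <-]] := sup_adherent delta_gt0 (piece_has_sup pL); exists y.
Qed.

Lemma Phi_piece_le_sup p : p \in L -> p.1 != 0 -> Phi (indic_sum [:: p]) <= piece_sup p.
Proof.
move=> pL p0; have unit_norm : `| `|p.1|^-1 *: p.1 | <= 1.
  by rewrite normrZ normfV normr_id mulVf ?normr_eq0.
suff -> : Phi (indic_sum [:: p]) = piece_form p (`|p.1|^-1 *: p.1).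
  exact: piece_form_le_sup.
congr Phi; apply/funext => t; rewrite /rescale /= !indic_sum_cons !indic_sum_nil.
by rewrite !scalerA mulfK ?normr_eq0.
Qed.

Lemma Phi_rescale z : Phi (rescale L z) = \sum_(p <- L) piece_form p (z p).
Proof.
rewrite /rescale (linear_indic_sum K Phi_lin) ?big_map //; last exact: disjoint_pieces_map.
by move=> _ /mapP[p /L_fin[mp finp] ->].
Qed.

Hypothesis L_neq0 : {in L, forall p, p.1 != 0}.

Lemma Phi_rescale_ge z beta :
  {in L, forall p, piece_sup p - beta < piece_form p (z p)} ->
  Phi (indic_sum L) - (size L)%:R * beta <= Phi (rescale L z).
Proof.
move=> zP; rewrite Phi_rescale (linear_indic_sum K Phi_lin) //.
have -> : (size L)%:R * beta = \sum_(p <- L) beta.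
  by rewrite big_const_seq count_predT iter_addr addr0 mulr_natl.
rewrite -sumrB !big_seq; apply: ler_sum => p pL; apply: le_trans (ltW (zP p pL)).
by rewrite lerD2r; exact: Phi_piece_le_sup (L_neq0 pL).
Qed.

Lemma wide_piece_pairs eps beta : wide_slices X eps -> eps < 2 -> 0 < beta ->
  exists z1 z2 : X * set T -> X, {in L, forall p, [/\ `|z1 p| <= 1, `|z2 p| <= 1,
    piece_sup p - beta < piece_form p (z1 p), piece_sup p - beta < piece_form p (z2 p)
    & eps < `|z1 p - z2 p|]}.
Proof.
move=> wide eps_lt2 beta_gt0.
have /choice[z zP] : forall p, exists uv : X * X, p \in L ->
    [/\ `|uv.1| <= 1, `|uv.2| <= 1, piece_sup p - beta < piece_form p uv.1,
        piece_sup p - beta < piece_form p uv.2 & eps < `|uv.1 - uv.2|].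
  move=> p; have [pL|] := boolP (p \in L); last by exists (0, 0).
  have [u [v uvP]] := wide_slices_sup wide eps_lt2 (linear_piece_form pL)
    (piece_form_le_sup pL) (piece_sup_adherent pL) (L_neq0 pL) beta_gt0.
  by exists (u, v).
by exists (fun p => (z p).1), (fun p => (z p).2) => p /zP.
Qed.

Lemma wide_pair_in_KB_slice eps a : wide_slices X eps -> 0 < eps -> eps <= 1 ->
  0 < a -> a <= 1 ->
  1 - a / 2 < Phi (indic_sum L) -> KB_norm NE (indic_sum L) <= 1 + a / 4 ->
  exists g1 g2, [/\ KB_space mu E g1 /\ KB_space mu E g2,
    KB_norm NE g1 <= 1 /\ KB_norm NE g2 <= 1, 1 - a < Phi g1 /\ 1 - a < Phi g2 &
    eps / 4 <= KB_norm NE (g1 - g2)].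
Proof.
move=> wide eps_gt0 eps_le1 a_gt0 a_le1 Phi_s norm_s.
set beta := a / (4 * (size L).+1%:R).
have beta_gt0 : 0 < beta by rewrite divr_gt0 // mulr_gt0 // ltr0n.
have sum_beta : (size L)%:R * beta <= a / 4.
  have beta_size : beta * (4 * ((size L)%:R + 1)) = a.
    by rewrite /beta natr1 divfK // mulf_neq0 ?pnatr_eq0.
  nra.
set c := (1 + a / 4)^-1.
have c_gt0 : 0 < c by rewrite invr_gt0; lra.
have c_inv : c * (1 + a / 4) = 1 by rewrite mulVf //; lra.
have [z1 [z2 zP]] := wide_piece_pairs wide (ltac:(lra)) beta_gt0.
pose g z := rescale L (fun p => c *: z p).
have g_slice z : {in L, forall p, `|z p| <= 1 /\ piece_sup p - beta < piece_form p (z p)} ->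
    KB_norm NE (g z) <= 1 /\ 1 - a < Phi (g z).
  move=> zP'; split.
    apply: le_trans (KB_norm_rescale_le K L_fin L_disj (ltW c_gt0) _) _.
      by move=> p /zP'[nz _]; rewrite normrZ gtr0_norm // ler_piMr // ltW.
    by rewrite -c_inv ler_wpM2l // ltW.
  have Phi_g : Phi (g z) = c * Phi (rescale L z).
    rewrite !Phi_rescale mulr_sumr !big_seq; apply: eq_bigr => p pL.
    exact: linear_formZ (linear_piece_form pL).
  have := Phi_rescale_ge (fun p pL => (zP' p pL).2).
  rewrite Phi_g => Phi_z; nra.
have [zP1 zP2] : {in L, forall p, `|z1 p| <= 1 /\ piece_sup p - beta < piece_form p (z1 p)} /\
    {in L, forall p, `|z2 p| <= 1 /\ piece_sup p - beta < piece_form p (z2 p)}.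
  by split=> p /zP[].
exists (g z1), (g z2); split.
- by split; exact: (KB_space_rescale K).
- by split; [exact: (g_slice _ zP1).1 | exact: (g_slice _ zP2).1].
- by split; [exact: (g_slice _ zP1).2 | exact: (g_slice _ zP2).2].
have -> : g z1 - g z2 = rescale L (fun p => c *: (z1 p - z2 p)).
  apply/funext => t; rewrite /g /rescale !fctE !indic_sum_map -sumrB.
  by apply: eq_bigr => p _; rewrite !scalerBr.
have norm_s_gt : 1 - a / 2 < KB_norm NE (indic_sum L).
  exact: lt_le_trans Phi_s (le_trans (ler_norm _) (Phi_le (KB_space_disjoint K L_fin L_disj))).
apply: le_trans (KB_norm_rescale_ge K L_fin L_disj (mulr_gt0 c_gt0 eps_gt0) _).
  have norm_s_ge : (1 + a / 4) / 4 <= KB_norm NE (indic_sum L) by lra.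
  have cN : 1 / 4 <= c * KB_norm NE (indic_sum L).
    by have := ler_wpM2l (ltW c_gt0) norm_s_ge; rewrite mulrA c_inv mul1r.
  nra.
move=> p /zP[_ _ _ _ /ltW wide_p]; rewrite normrZ gtr0_norm // ler_pM2l //.
Qed.

End Pieces.

Lemma simple_near_sup a : measure_is_complete mu ->
  (forall f : T -> X, KB_space mu E f -> forall eps, 0 < eps -> exists s : T -> X,
     [/\ simple_fun mu s, KB_space mu E s & KB_norm NE (f \- s) < eps]) ->
  (forall delta, 0 < delta -> exists v,
     [/\ KB_space mu E v, KB_norm NE v <= 1 & 1 - delta < Phi v]) ->
  0 < a -> exists s, [/\ simple_fun mu s, 1 - a / 2 < Phi s & KB_norm NE s <= 1 + a / 4].
Proof.
move=> mu_complete dense Phi_sup a_gt0.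
have a4_gt0 : 0 < a / 4 by rewrite divr_gt0.
have [v [KBv norm_v Phi_v]] := Phi_sup _ a4_gt0.
have [s [s_simple KBs norm_vs]] := dense v KBv _ a4_gt0.
have KBvs := KB_spaceB_simple K mu_complete KBv s_simple.
exists s; split=> //.
  have Phi_vs : Phi (v \- s) = Phi v - Phi s.
    have -> : v \- s = -1 *: s + v by apply/funext => t; rewrite !fctE scaleN1r addrC.
    by rewrite Phi_lin // mulN1r addrC.
  have := le_lt_trans (ler_norm _) (le_lt_trans (Phi_le KBvs) norm_vs).
  rewrite Phi_vs; lra.
have s_le t : `|s t| <= `|v t| + `|v t - s t|.
  by rewrite -{1}(subKr (v t) (s t)) ler_normB.
have [_ norm_s] := KB_norm_le_add K KBv KBvs (measurable_norm_simple s_simple) s_le.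
lra.
Qed.

End SliceTransfer.

Theorem mainTheorem5 (R : realType) (d : measure_display) (T : measurableType d)
    (mu : {measure set T -> \bar R}) (E : set (T -> R)) (NE : (T -> R) -> R)
    (X : completeNormedModType R) :
  measure_is_complete mu ->
  sigma_finite setT mu ->
  kothe_space mu E NE ->
  (* simple functions are dense in E(X) *)
  (forall f : T -> X, KB_space mu E f -> forall eps : R, 0 < eps ->
     exists s : T -> X,
       [/\ simple_fun mu s, KB_space mu E s & KB_norm NE (f \- s) < eps]) ->
  BDP_on (V := T -> X) (KB_space mu E) (KB_norm NE) ->
  BDP X.
Proof.
move=> mu_complete _ K dense BDP_KB.
apply: contrapT => /not_BDP_wide_slices[eps /andP[eps_gt0 eps_le1] wide].
have [Phi [alpha [dd [Phi_lin Phi_le Phi_sup [alpha_gt0 dd_lt] Phi_diam]]]] :=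
  BDP_KB (eps / 4) (divr_gt0 eps_gt0 (ltr0n _ 4)).
set a := Num.min alpha 1.
have a_gt0 : 0 < a by rewrite lt_min alpha_gt0 ltr01.
have a_le1 : a <= 1 by rewrite ge_min lexx orbT.
have a_le_alpha : a <= alpha by rewrite ge_min lexx.
have [_ [[L [L_pieces /disjoint_piecesP L_disj ->]] Phi_s norm_s]] :=
  simple_near_sup K Phi_lin Phi_le mu_complete dense Phi_sup a_gt0.
have [L_fin L_neq0] : {in L, forall p, finite_piece mu p} /\ {in L, forall p, p.1 != 0}.
  by split=> p /L_pieces[].
have [g1 [g2 [[KB1 KB2] [norm1 norm2] [Phi1 Phi2] diam]]] :=
  wide_pair_in_KB_slice K Phi_lin Phi_le L_fin L_disj L_neq0 wide
    eps_gt0 eps_le1 a_gt0 a_le1 Phi_s norm_s.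
have := Phi_diam g1 g2 KB1 KB2 norm1 norm2 (ltac:(lra)) (ltac:(lra)).
lra.
Qed.
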